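(* Let $k\ge 3$ be an integer, $B\ge 1$ real and $d$ a natural number. The number of pairs $(u,v)\in\mathbb{Z}^2$ with $|u|\leq B$, $|v|\leq B$ and $u^k\equiv v^k\pmod d$ is $O(B^{1+\varepsilon}+B^{2+\varepsilon}d^{\varepsilon-2/k})$ for every $\varepsilon>0$, the implicit constant depending only on $k$ and $\varepsilon$. *)

From Stdlib Require Import Reals ZArith List.
Import ListNotations.
Open Scope R_scope.

Definition zrange (M : Z) : list Z :=
  map (fun n => (Z.of_nat n - M)%Z) (seq 0 (Z.to_nat (2 * M + 1))).

(* Since |u| <= B < up B, all such pairs lie in zrange (|up B|)^2, so this
   enumeration counts exactly the set in question. *)
Definition pair_count (k : nat) (B : R) (d : nat) : nat :=
  let M := Z.abs (up B) in
  length (filter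
    (fun p : Z * Z =>
       (if Rle_dec (Rabs (IZR (fst p))) B then true else false) &&
       (if Rle_dec (Rabs (IZR (snd p))) B then true else false) &&
       Z.eqb (Z.modulo (fst p ^ Z.of_nat k - snd p ^ Z.of_nat k) (Z.of_nat d)) 0)%bool
    (list_prod (zrange M) (zrange M))).

From Stdlib Require Import Reals ZArith List Lia Lra Psatz Bool Znumtheory Zpow_facts.
Import ListNotations.

(* Put [g = gcd(u, v, d)] and [d' = d / gcd(d, g^k)]. Then [u / g] is a unit modulo [d'] and
   the ratio [(v / g) / (u / g)] is a [k]-th root of unity modulo [d'], so for fixed [g] and [u]
   the admissible [v] lie in [rho(d')] residue classes modulo [g d'], where [rho(q)] counts the
   [k]-th roots of unity modulo [q]. This bounds the count by
   [sum_(g | d) (2B/g + 1) rho(d') (2B/(g d') + 1)], and [g^2 d' >= d^(2/k)]. Both [rho] and the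
   divisor function [tau] are submultiplicative, with [tau(p^m) = m + 1] and, by lifting the
   exponent, [rho(p^m) <= 4k^2]; hence both are [O(n^delta)] for every [delta > 0]. This gives
   the bound when [d <= 2B^k]; when [d > 2B^k] the congruence forces [u^k = v^k], so [v = +-u]. *)

Definition count_if {A} (f : A -> bool) (l : list A) : nat := length (filter f l).

Definition sum_over {A} (h : A -> nat) (l : list A) : nat := list_sum (map h l).

Lemma sum_over_cons {A} (h : A -> nat) x l : sum_over h (x :: l) = (h x + sum_over h l)%nat.
Proof. reflexivity. Qed.

Lemma sum_over_le {A} (h1 h2 : A -> nat) l :
  (forall x, In x l -> (h1 x <= h2 x)%nat) -> (sum_over h1 l <= sum_over h2 l)%nat.
Proof.
  induction l as [|x l IH]; intros H; [cbn; lia|]. rewrite !sum_over_cons.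
  specialize (IH (fun y Hy => H y (or_intror Hy))). specialize (H x (or_introl eq_refl)). lia.
Qed.

Lemma sum_over_const {A} c (l : list A) : sum_over (fun _ => c) l = (c * length l)%nat.
Proof. induction l; [cbn; lia|]. rewrite sum_over_cons, IHl. cbn. lia. Qed.

Lemma sum_over_le_const {A} (h : A -> nat) c l :
  (forall x, In x l -> (h x <= c)%nat) -> (sum_over h l <= c * length l)%nat.
Proof. intros H. rewrite <- sum_over_const. now apply sum_over_le. Qed.

Lemma count_if_cons {A} (f : A -> bool) x l :
  count_if f (x :: l) = ((if f x then 1 else 0) + count_if f l)%nat.
Proof. unfold count_if; cbn. now destruct (f x). Qed.

Lemma count_if_length {A} (f : A -> bool) l : (count_if f l <= length l)%nat.
Proof. apply filter_length_le. Qed.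

Lemma count_if_ext {A} (f g : A -> bool) l : (forall x, f x = g x) -> count_if f l = count_if g l.
Proof. intros H. unfold count_if. f_equal. now apply filter_ext. Qed.

Lemma count_if_zero {A} (f : A -> bool) l :
  (forall x, In x l -> f x = false) -> count_if f l = 0%nat.
Proof.
  induction l as [|x l IH]; intros H; [reflexivity|].
  rewrite count_if_cons, H by now left.
  apply IH. intros y Hy. apply H. now right.
Qed.

Lemma sum_over_indicator {A} (P : A -> bool) c l :
  sum_over (fun x => if P x then c else 0%nat) l = (c * count_if P l)%nat.
Proof.
  induction l as [|x l IH]; [unfold count_if; cbn; lia|].
  rewrite sum_over_cons, count_if_cons, IH. destruct (P x); lia.
Qed.

Lemma count_if_list_prod {A B} (f : A * B -> bool) l1 l2 :
  count_if f (list_prod l1 l2) = sum_over (fun x => count_if (fun y => f (x, y)) l2) l1.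
Proof.
  induction l1 as [|x l1 IH]; [reflexivity|].
  rewrite sum_over_cons, <- IH. unfold count_if. cbn.
  now rewrite filter_app, length_app, filter_map_swap, length_map.
Qed.

Lemma count_if_cover {A B} (f : A -> bool) (g : B -> A -> bool) (ys : list B) l :
  (forall x, In x l -> f x = true -> exists y, In y ys /\ g y x = true) ->
  (count_if f l <= sum_over (fun y => count_if (g y) l) ys)%nat.
Proof.
  induction l as [|x l IH]; intros H.
  - unfold count_if; cbn. lia.
  - assert (Hsplit : sum_over (fun y => count_if (g y) (x :: l)) ys =
      (sum_over (fun y => if g y x then 1 else 0) ys + sum_over (fun y => count_if (g y) l) ys)%nat).
    { clear H IH. induction ys as [|y ys IHys]; [reflexivity|].
      rewrite !sum_over_cons, IHys, count_if_cons. lia. }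
    rewrite Hsplit, count_if_cons. specialize (IH (fun y Hy => H y (or_intror Hy))).
    destruct (f x) eqn:Hfx; [|lia].
    destruct (H x (or_introl eq_refl) Hfx) as [y [Hy Hgy]].
    enough (1 <= sum_over (fun y => if g y x then 1 else 0) ys)%nat by lia.
    apply in_split in Hy as [ys1 [ys2 ->]]. unfold sum_over.
    rewrite map_app, list_sum_app. cbn. rewrite Hgy. lia.
Qed.

Lemma NoDup_length_le_inj {A B} (f : A -> B) (l : list A) (l' : list B) :
  NoDup l -> (forall x, In x l -> In (f x) l') ->
  (forall x y, In x l -> In y l -> f x = f y -> x = y) -> (length l <= length l')%nat.
Proof.
  intros Hl Hmaps Hinj. rewrite <- (length_map f l). apply NoDup_incl_length.
  - now apply NoDup_map_NoDup_ForallPairs.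
  - intros b Hb. apply in_map_iff in Hb as [x [<- Hx]]. auto.
Qed.

Local Open Scope Z_scope.

Definition zseq (a n : Z) : list Z := map (fun i => a + Z.of_nat i) (seq 0 (Z.to_nat n)).

Lemma in_zseq a n x : In x (zseq a n) <-> a <= x < a + n.
Proof.
  unfold zseq. rewrite in_map_iff. split.
  - intros [i [<- Hi]]. apply in_seq in Hi. lia.
  - intros H. exists (Z.to_nat (x - a)). split; [lia|]. apply in_seq. lia.
Qed.

Lemma zseq_NoDup a n : NoDup (zseq a n).
Proof.
  unfold zseq. apply NoDup_map_NoDup_ForallPairs; [|apply seq_NoDup].
  intros x y _ _ H. lia.
Qed.

Lemma length_zseq a n : length (zseq a n) = Z.to_nat n.
Proof. unfold zseq. now rewrite length_map, length_seq. Qed.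

Lemma zrange_NoDup M : NoDup (zrange M).
Proof.
  unfold zrange. apply NoDup_map_NoDup_ForallPairs; [|apply seq_NoDup].
  intros x y _ _ E. lia.
Qed.

Definition divb (q x : Z) : bool := Z.eqb (x mod q) 0.

Lemma divb_iff q x : q <> 0 -> divb q x = true <-> (q | x).
Proof. intros Hq. unfold divb. rewrite Z.eqb_eq. now apply Z.mod_divide. Qed.

Lemma divide_small_eq_0 q x : (q | x) -> Z.abs x < Z.abs q -> x = 0.
Proof.
  intros H1 H2. destruct (Z.eq_dec x 0) as [|Hx]; auto.
  pose proof (Zdivide_bounds q x H1 Hx). lia.
Qed.

Lemma divide_sub_mod q x : q <> 0 -> (q | x - x mod q).
Proof. intros Hq. rewrite Z.mod_eq by exact Hq. exists (x / q). ring. Qed.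

Lemma mod_eq_of_divide_sub q a b : 0 < q -> (q | a - b) -> a mod q = b mod q.
Proof. intros Hq [c Hc]. replace a with (b + c * q) by lia. rewrite Z.mod_add; lia. Qed.

Lemma eq_of_divide_sub_lt q a b : 0 < q -> (q | a - b) -> 0 <= a < q -> 0 <= b < q -> a = b.
Proof.
  intros Hq Hd Ha Hb. apply divide_small_eq_0 in Hd; lia.
Qed.

Lemma pow_of_nat_succ w t : w ^ Z.of_nat (S t) = w * w ^ Z.of_nat t.
Proof. rewrite Nat2Z.inj_succ, Z.pow_succ_r; lia. Qed.

Lemma divide_pow_pow_le p a b : (a <= b)%nat -> (p ^ Z.of_nat a | p ^ Z.of_nat b).
Proof.
  intros H. exists (p ^ Z.of_nat (b - a)). rewrite <- Z.pow_add_r by lia. f_equal. lia.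
Qed.

Lemma pow_of_nat_pos p m : 0 < p -> 0 < p ^ Z.of_nat m.
Proof. intros Hp. apply Z.pow_pos_nonneg; lia. Qed.

Lemma divide_mul_mul a b c d : (a | b) -> (c | d) -> (a * c | b * d).
Proof. intros [x ->] [y ->]. exists (x * y). ring. Qed.

Lemma divide_pow_sub_pow a b n : (a - b | a ^ Z.of_nat n - b ^ Z.of_nat n).
Proof.
  induction n.
  - cbn. replace (1 - 1) with 0 by ring. apply Z.divide_0_r.
  - rewrite !pow_of_nat_succ.
    replace (a * a ^ Z.of_nat n - b * b ^ Z.of_nat n) with
      (a * (a ^ Z.of_nat n - b ^ Z.of_nat n) + (a - b) * b ^ Z.of_nat n) by ring.
    apply Z.divide_add_r; [now apply Z.divide_mul_r|apply Z.divide_factor_l].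
Qed.

Lemma divide_pow_sub_1 q w n : (q | w - 1) -> (q | w ^ Z.of_nat n - 1).
Proof.
  intros H. eapply Z.divide_trans; [exact H|].
  replace 1 with (1 ^ Z.of_nat n) at 2 by apply Z.pow_1_l, Nat2Z.is_nonneg.
  apply divide_pow_sub_pow.
Qed.

Lemma divide_pow_of_divide q z n : (1 <= n)%nat -> (q | z) -> (q | z ^ Z.of_nat n).
Proof.
  intros Hn Hz. replace n with (S (n - 1)) by lia. rewrite pow_of_nat_succ.
  now apply Z.divide_mul_l.
Qed.

(* [v |-> (v + X) / q] is injective on the counted [v] and maps them into [[0, 2X/q]]. *)
Lemma count_arith_progression (l : list Z) X q r : NoDup l -> 0 <= X -> 0 < q ->
  (count_if (fun v => Z.leb (Z.abs v) X && divb q (v - r)) l <= Z.to_nat (2 * X / q) + 1)%nat.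
Proof.
  intros Hl HX Hq. unfold count_if.
  assert (0 <= 2 * X / q) by (apply Z.div_pos; lia).
  replace (Z.to_nat (2 * X / q) + 1)%nat with (length (zseq 0 (2 * X / q + 1)))
    by (rewrite length_zseq; lia).
  apply (NoDup_length_le_inj (fun v => (v + X) / q)); [now apply NoDup_filter| |].
  - intros v Hv. apply filter_In in Hv as [_ Hv]. apply andb_prop in Hv as [Hv _].
    apply Z.leb_le in Hv. apply in_zseq. split.
    + apply Z.div_pos; lia.
    + assert ((v + X) / q <= 2 * X / q) by (apply Z.div_le_mono; lia). lia.
  - intros v w Hv Hw E. apply filter_In in Hv as [_ Hv], Hw as [_ Hw].
    apply andb_prop in Hv as [_ Hv], Hw as [_ Hw].
    apply divb_iff in Hv, Hw; try lia.
    assert (Hm : (v + X) mod q = (w + X) mod q).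
    { apply mod_eq_of_divide_sub; [exact Hq|].
      replace (v + X - (w + X)) with ((v - r) - (w - r)) by ring. now apply Z.divide_sub_r. }
    pose proof (Z.div_mod (v + X) q ltac:(lia)). pose proof (Z.div_mod (w + X) q ltac:(lia)). lia.
Qed.

(** * Lifting the exponent *)

Fixpoint geom_sum (w : Z) (t : nat) : Z :=
  match t with O => 0 | S t => geom_sum w t + w ^ Z.of_nat t end.

Lemma pow_sub_1_factor w t : w ^ Z.of_nat t - 1 = (w - 1) * geom_sum w t.
Proof.
  induction t; cbn [geom_sum]; [cbn; ring|]. rewrite pow_of_nat_succ. nia.
Qed.

Lemma geom_sum_congr p w t : (p | w - 1) -> (p | geom_sum w t - Z.of_nat t).
Proof.
  intros H. induction t; cbn [geom_sum]; [apply Z.divide_0_r|].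
  replace (geom_sum w t + w ^ Z.of_nat t - Z.of_nat (S t)) with
    ((geom_sum w t - Z.of_nat t) + (w ^ Z.of_nat t - 1)) by lia.
  apply Z.divide_add_r; [exact IHt|now apply divide_pow_sub_1].
Qed.

Lemma rel_prime_prime_pow p m x : prime p -> 0 <= m -> ~ (p | x) -> rel_prime (p ^ m) x.
Proof.
  intros Hp Hm Hx.
  apply rel_prime_sym, rel_prime_Zpower_r; auto. now apply rel_prime_sym, prime_rel_prime.
Qed.

Lemma prime_divide_pow p a n : prime p -> (p | a ^ Z.of_nat n) -> (p | a).
Proof.
  intros Hp. induction n; intros H.
  - cbn in H. pose proof (prime_ge_2 p Hp). apply Z.divide_1_r_nonneg in H; lia.
  - rewrite pow_of_nat_succ in H. destruct (prime_mult p Hp _ _ H); auto.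
Qed.

(* [w^t - 1 = (w - 1) * geom_sum w t], and [geom_sum w t = t] is a unit modulo [p]. *)
Lemma lte_coprime_exponent p w t m : prime p -> 0 <= m -> (p | w - 1) -> ~ (p | Z.of_nat t) ->
  (p ^ m | w ^ Z.of_nat t - 1) -> (p ^ m | w - 1).
Proof.
  intros Hp Hm H1 Ht H. rewrite pow_sub_1_factor in H.
  apply Gauss with (geom_sum w t); [now rewrite Z.mul_comm|].
  apply rel_prime_prime_pow; auto. intros Hg. apply Ht.
  replace (Z.of_nat t) with (geom_sum w t - (geom_sum w t - Z.of_nat t)) by ring.
  apply Z.divide_sub_r; [exact Hg|now apply geom_sum_congr].
Qed.

Fixpoint geom_sum_sum (w : Z) (n : nat) : Z :=
  match n with O => 0 | S n => geom_sum_sum w n + geom_sum w n end.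

Lemma geom_sum_sub_factor w n : geom_sum w n - Z.of_nat n = (w - 1) * geom_sum_sum w n.
Proof.
  induction n; [cbn; ring|].
  cbn [geom_sum_sum geom_sum]. rewrite Nat2Z.inj_succ. pose proof (pow_sub_1_factor w n). lia.
Qed.

Lemma geom_sum_sum_congr p w n : (p | w - 1) ->
  (p | 2 * geom_sum_sum w n - Z.of_nat n * (Z.of_nat n - 1)).
Proof.
  intros H. induction n; cbn [geom_sum_sum]; [apply Z.divide_0_r|].
  rewrite Nat2Z.inj_succ.
  replace (2 * (geom_sum_sum w n + geom_sum w n) - Z.succ (Z.of_nat n) * (Z.succ (Z.of_nat n) - 1))
    with ((2 * geom_sum_sum w n - Z.of_nat n * (Z.of_nat n - 1)) + 2 * (geom_sum w n - Z.of_nat n))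
    by lia.
  apply Z.divide_add_r; [exact IHn|]. apply Z.divide_mul_r. now apply geom_sum_congr.
Qed.

(* Lifting the exponent needs [w = 1 (mod 4)] when [p = 2]. *)
Definition lte_modulus (p : Z) : Z := if Z.eqb p 2 then 4 else p.

Lemma prime_divide_lte_modulus p : (p | lte_modulus p).
Proof.
  unfold lte_modulus. destruct (Z.eqb_spec p 2) as [->|_]; [now exists 2|apply Z.divide_refl].
Qed.

Lemma geom_sum_prime_congr p w : prime p -> (lte_modulus p | w - 1) ->
  (p * p | geom_sum w (Z.to_nat p) - p).
Proof.
  intros Hp H. pose proof (prime_ge_2 p Hp). unfold lte_modulus in H.
  destruct (Z.eqb_spec p 2) as [->|Hp2].
  - change (Z.to_nat 2) with 2%nat. cbn [geom_sum Z.of_nat Pos.of_succ_nat].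
    rewrite Z.pow_0_r, Z.pow_1_r. now replace (0 + 1 + w - 2) with (w - 1) by ring.
  - replace (geom_sum w (Z.to_nat p) - p) with (geom_sum w (Z.to_nat p) - Z.of_nat (Z.to_nat p))
      by lia.
    rewrite geom_sum_sub_factor.
    pose proof (geom_sum_sum_congr p w (Z.to_nat p) H) as G. rewrite Z2Nat.id in G by lia.
    assert (G2 : (p | 2 * geom_sum_sum w (Z.to_nat p))).
    { replace (2 * geom_sum_sum w (Z.to_nat p)) with
        ((2 * geom_sum_sum w (Z.to_nat p) - p * (p - 1)) + p * (p - 1)) by ring.
      apply Z.divide_add_r; [exact G|apply Z.divide_factor_l]. }
    destruct (prime_mult p Hp _ _ G2) as [G3|[c Hc]].
    + apply Z.divide_pos_le in G3; lia.
    + destruct H as [a Ha]. exists (a * c). rewrite Ha, Hc. ring.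
Qed.

(* [w^p - 1 = (w - 1) * p * (1 + c p)], and [1 + c p] is prime to [p]. *)
Lemma lte_prime_exponent p w m : prime p -> 0 <= m -> (lte_modulus p | w - 1) ->
  (p ^ (m + 1) | w ^ p - 1) -> (p ^ m | w - 1).
Proof.
  intros Hp Hm H Hd. pose proof (prime_ge_2 p Hp).
  destruct (geom_sum_prime_congr p w Hp H) as [c Hc].
  assert (Ew : w ^ p - 1 = (w - 1) * p * (1 + c * p)).
  { replace (w ^ p) with (w ^ Z.of_nat (Z.to_nat p)) by (rewrite Z2Nat.id; lia).
    rewrite pow_sub_1_factor. nia. }
  rewrite Ew, Z.pow_add_r, Z.pow_1_r in Hd by lia.
  replace ((w - 1) * p * (1 + c * p)) with (((1 + c * p) * (w - 1)) * p) in Hd by ring.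
  apply Z.mul_divide_cancel_r in Hd; [|lia].
  apply Gauss in Hd; [exact Hd|]. apply rel_prime_prime_pow; auto.
  intros Hc1. apply (Z.divide_add_r p (1 + c * p) (- c * p)) in Hc1; [|exists (- c); ring].
  replace (1 + c * p + - c * p) with 1 in Hc1 by ring.
  apply Z.divide_pos_le in Hc1; lia.
Qed.

Lemma lifting_the_exponent p k : prime p -> (1 <= k)%nat ->
  exists s : nat, (p ^ Z.of_nat s | Z.of_nat k) /\
    forall (m : nat) w, (lte_modulus p | w - 1) -> (p ^ Z.of_nat m | w ^ Z.of_nat k - 1) ->
      (p ^ Z.of_nat (m - s) | w - 1).
Proof.
  intros Hp. pose proof (prime_ge_2 p Hp).
  induction k as [k IH] using (well_founded_induction lt_wf). intros Hk.
  destruct (Zdivide_dec p (Z.of_nat k)) as [[k0 Hk0]|Hpk].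
  - assert (Hk0p : 1 <= k0) by nia.
    destruct (IH (Z.to_nat k0) ltac:(nia) ltac:(lia)) as [s [Hs Hlift]].
    rewrite Z2Nat.id in Hs by lia.
    exists (S s). split.
    + rewrite pow_of_nat_succ, Hk0, Z.mul_comm. now apply Z.mul_divide_mono_r.
    + intros m w Hw Hm.
      assert (Hwp : (lte_modulus p | w ^ p - 1)).
      { replace (w ^ p) with (w ^ Z.of_nat (Z.to_nat p)) by (rewrite Z2Nat.id; lia).
        now apply divide_pow_sub_1. }
      assert (Hmp : (p ^ Z.of_nat m | (w ^ p) ^ Z.of_nat (Z.to_nat k0) - 1)).
      { rewrite <- Z.pow_mul_r, Z2Nat.id by lia. now replace (p * k0) with (Z.of_nat k) by lia. }
      specialize (Hlift m (w ^ p) Hwp Hmp).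
      destruct (Nat.le_gt_cases m s) as [Hms|Hms].
      * replace (m - S s)%nat with 0%nat by lia. apply Z.divide_1_l.
      * apply lte_prime_exponent; auto; [lia|].
        now replace (Z.of_nat (m - S s) + 1) with (Z.of_nat (m - s)) by lia.
  - exists 0%nat. split; [apply Z.divide_1_l|].
    intros m w Hw Hm. rewrite Nat.sub_0_r.
    apply lte_coprime_exponent with k; auto; [lia|].
    eapply Z.divide_trans; [apply prime_divide_lte_modulus|exact Hw].
Qed.

(** * Roots of unity modulo prime powers *)

(* Coefficient lists are lowest degree first. *)
Fixpoint peval (c : list Z) (x : Z) : Z :=
  match c with [] => 0 | a :: c' => a + x * peval c' x end.

Lemma peval_factor_root c r : (2 <= length c)%nat ->
  exists q, length q = (length c - 1)%nat /\ last q 0 = last c 0 /\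
    forall x, peval c x = (x - r) * peval q x + peval c r.
Proof.
  induction c as [|a c IH]; intros Hl; cbn in Hl; [lia|].
  destruct c as [|b c]; [cbn in Hl; lia|].
  destruct c as [|b' c].
  - exists [b]. cbn. repeat split. intros x. ring.
  - destruct (IH ltac:(cbn; lia)) as [q [Hq1 [Hq2 Hq3]]].
    exists (peval (b :: b' :: c) r :: q). split; [cbn in *; lia|]. split.
    + destruct q as [|q0 q]; [cbn in Hq1; lia|]. exact Hq2.
    + intros x. change (peval (a :: b :: b' :: c) x) with (a + x * peval (b :: b' :: c) x).
      change (peval (a :: b :: b' :: c) r) with (a + r * peval (b :: b' :: c) r).
      change (peval (peval (b :: b' :: c) r :: q) x) with (peval (b :: b' :: c) r + x * peval q x).
      rewrite (Hq3 x). ring.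
Qed.

(* A root [r] splits off [x - r]; modulo [p], every other root is a root of the quotient. *)
Lemma count_roots_mod_prime p n c : prime p -> length c = S n -> last c 0 = 1 ->
  (count_if (fun z => divb p (peval c z)) (zseq 0 p) <= n)%nat.
Proof.
  intros Hp. pose proof (prime_ge_2 p Hp). revert c. induction n; intros c Hl Hlast.
  - destruct c as [|a [|]]; cbn in Hl; try lia. cbn in Hlast. subst a.
    rewrite count_if_zero; [lia|]. intros x _. unfold divb. cbn [peval].
    now rewrite Z.mul_0_r, Z.add_0_r, Z.mod_1_l by lia.
  - unfold count_if.
    destruct (filter (fun z => divb p (peval c z)) (zseq 0 p)) as [|r F] eqn:EF; [cbn; lia|].
    assert (Hr : In r (filter (fun z => divb p (peval c z)) (zseq 0 p))) by (rewrite EF; now left).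
    destruct (peval_factor_root c r ltac:(lia)) as [q [Hq1 [Hq2 Hq3]]].
    assert (IHq := IHn q ltac:(lia) ltac:(congruence)). unfold count_if in IHq.
    rewrite <- EF.
    apply Nat.le_trans with (length (r :: filter (fun z => divb p (peval q z)) (zseq 0 p)));
      [|cbn; lia].
    apply NoDup_incl_length; [apply NoDup_filter, zseq_NoDup|].
    intros z Hz. apply filter_In in Hz as [Hz1 Hz2], Hr as [Hr1 Hr2].
    apply divb_iff in Hz2, Hr2; try lia. apply in_zseq in Hz1, Hr1.
    rewrite Hq3 in Hz2.
    assert (Hd : (p | (z - r) * peval q z)).
    { replace ((z - r) * peval q z) with ((z - r) * peval q z + peval c r - peval c r) by ring.
      now apply Z.divide_sub_r. }
    destruct (prime_mult p Hp _ _ Hd) as [Hd1|Hd1].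
    + left. apply divide_small_eq_0 in Hd1; lia.
    + right. apply filter_In. split; [apply in_zseq; lia|]. apply divb_iff; [lia|exact Hd1].
Qed.

Definition unit_root_poly (k : nat) : list Z := (-1) :: repeat 0 (k - 1) ++ [1].

Lemma peval_unit_root_poly k x : (1 <= k)%nat -> peval (unit_root_poly k) x = x ^ Z.of_nat k - 1.
Proof.
  intros Hk. unfold unit_root_poly. cbn [peval].
  assert (Hmono : forall j, peval (repeat 0 j ++ [1]) x = x ^ Z.of_nat j).
  { induction j; cbn [peval repeat app]; [rewrite Z.pow_0_r; ring|].
    rewrite IHj, pow_of_nat_succ. ring. }
  rewrite Hmono. replace k with (S (k - 1)) at 2 by lia. rewrite pow_of_nat_succ. ring.
Qed.

Definition unit_rootb (k : nat) (q z : Z) : bool := divb q (z ^ Z.of_nat k - 1).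

Definition rho (k : nat) (q : Z) : nat := count_if (unit_rootb k q) (zseq 0 q).

Lemma rho_prime_le p k : prime p -> (1 <= k)%nat -> (rho k p <= k)%nat.
Proof.
  intros Hp Hk. unfold rho.
  rewrite (count_if_ext _ (fun z => divb p (peval (unit_root_poly k) z))).
  - apply count_roots_mod_prime; [exact Hp| |].
    + unfold unit_root_poly. cbn. rewrite length_app, repeat_length. cbn. lia.
    + unfold unit_root_poly. rewrite app_comm_cons. apply last_last.
  - intros z. unfold unit_rootb. now rewrite peval_unit_root_poly.
Qed.

Lemma rho_le_modulus k q : (rho k q <= Z.to_nat q)%nat.
Proof. unfold rho. rewrite <- (length_zseq 0 q). apply count_if_length. Qed.

Lemma divide_pow_sub_1_mod m q z k : m <> 0 -> (m | q) -> (q | z ^ Z.of_nat k - 1) ->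
  (m | (z mod m) ^ Z.of_nat k - 1).
Proof.
  intros Hm Hmq Hz.
  replace ((z mod m) ^ Z.of_nat k - 1) with
    ((z ^ Z.of_nat k - 1) - (z ^ Z.of_nat k - (z mod m) ^ Z.of_nat k)) by ring.
  apply Z.divide_sub_r; [eapply Z.divide_trans; eauto|].
  eapply Z.divide_trans; [|apply divide_pow_sub_pow]. now apply divide_sub_mod.
Qed.

Lemma divide_mul_of_coprime a b n : Z.gcd a b = 1 -> (a | n) -> (b | n) -> (a * b | n).
Proof.
  intros Hg [c ->] Hb.
  assert (Hbc : (b | c)) by (apply Z.gauss with a; [now rewrite Z.mul_comm|now rewrite Z.gcd_comm]).
  destruct Hbc as [e ->]. exists e. ring.
Qed.

(* Chinese remainder theorem: [z] is determined by [(z mod a, z mod b)]. *)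
Lemma rho_mul_le k a b : 1 <= a -> 1 <= b -> Z.gcd a b = 1 ->
  (rho k (a * b) <= rho k a * rho k b)%nat.
Proof.
  intros Ha Hb Hg. unfold rho, count_if. rewrite <- length_prod.
  apply (NoDup_length_le_inj (fun z => (z mod a, z mod b))); [apply NoDup_filter, zseq_NoDup| |].
  - intros z Hz. apply filter_In in Hz as [Hz1 Hz2]. apply in_zseq in Hz1.
    unfold unit_rootb in *. apply divb_iff in Hz2; [|lia].
    apply in_prod; apply filter_In; split;
      try (apply in_zseq; apply Z.mod_pos_bound; lia);
      apply divb_iff; try lia; apply divide_pow_sub_1_mod with (a * b); auto; try lia.
    + apply Z.divide_factor_l.
    + apply Z.divide_factor_r.
  - intros z z' Hz Hz' E. injection E as E1 E2.
    apply filter_In in Hz as [Hz _], Hz' as [Hz' _]. apply in_zseq in Hz, Hz'.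
    apply eq_of_divide_sub_lt with (a * b); try lia.
    apply divide_mul_of_coprime; [exact Hg| |].
    + rewrite (Z.div_mod z a), (Z.div_mod z' a), E1 by lia. exists (z / a - z' / a). ring.
    + rewrite (Z.div_mod z b), (Z.div_mod z' b), E2 by lia. exists (z / b - z' / b). ring.
Qed.

Section UnitRootsModPrimePower.

Variables (p : Z) (k s : nat).
Hypothesis prime_p : prime p.
Hypothesis k_pos : (1 <= k)%nat.
Hypothesis lift : forall (m : nat) w, (lte_modulus p | w - 1) ->
  (p ^ Z.of_nat m | w ^ Z.of_nat k - 1) -> (p ^ Z.of_nat (m - s) | w - 1).

(* With [b z = 1 (mod p^m)], the quotient [w = z' b] is a [k]-th root of unity that is
   [1] modulo [lte_modulus p], and [z' - z = z' u p^m + (w - 1) z]. *)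
Lemma unit_roots_congr_lift m z z' : (1 <= m)%nat -> (lte_modulus p | p ^ Z.of_nat m) ->
  (p ^ Z.of_nat m | z ^ Z.of_nat k - 1) -> (p ^ Z.of_nat m | z' ^ Z.of_nat k - 1) ->
  (lte_modulus p | z - z') -> (p ^ Z.of_nat (m - s) | z' - z).
Proof.
  intros Hm H0 Hz Hz' Hzz. set (q := p ^ Z.of_nat m) in *.
  pose proof (prime_ge_2 p prime_p).
  assert (Hpq : (p | q)) by (apply divide_pow_of_divide; [lia|apply Z.divide_refl]).
  assert (Hnz : ~ (p | z)).
  { intros Hpz. assert (Hp1 : (p | 1)).
    { replace 1 with (z ^ Z.of_nat k - (z ^ Z.of_nat k - 1)) by ring.
      apply Z.divide_sub_r; [now apply divide_pow_of_divide|now apply Z.divide_trans with q]. }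
    apply Z.divide_pos_le in Hp1; lia. }
  destruct (rel_prime_bezout _ _ (rel_prime_prime_pow p (Z.of_nat m) z prime_p ltac:(lia) Hnz))
    as [u b Hub]. fold q in Hub.
  set (w := z' * b).
  assert (Hw1 : (lte_modulus p | w - 1)).
  { replace (w - 1) with (b * (z' - z) - u * q) by (unfold w; lia).
    apply Z.divide_sub_r; apply Z.divide_mul_r; auto.
    replace (z' - z) with (- (z - z')) by ring. now apply Z.divide_opp_r. }
  assert (Hwk : (q | w ^ Z.of_nat k - 1)).
  { unfold w.
    replace ((z' * b) ^ Z.of_nat k - 1) with
      (b ^ Z.of_nat k * (z' ^ Z.of_nat k - 1) - b ^ Z.of_nat k * (z ^ Z.of_nat k - 1)
       + ((b * z) ^ Z.of_nat k - 1)) by (rewrite !Z.pow_mul_l; ring).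
    apply Z.divide_add_r; [apply Z.divide_sub_r; now apply Z.divide_mul_r|].
    apply divide_pow_sub_1. exists (- u). lia. }
  replace (z' - z) with (z' * u * q + (w - 1) * z).
  2:{ unfold w. transitivity (z' * (u * q + b * z) - z); [ring|]. rewrite Hub. ring. }
  apply Z.divide_add_r; [|apply Z.divide_mul_l; now apply lift].
  apply Z.divide_mul_r. apply divide_pow_pow_le. lia.
Qed.

(* Each residue class modulo [lte_modulus p] contains at most [p^s] roots of unity modulo
   [p^m], since they are pairwise congruent modulo [p^(m-s)]. *)
Lemma count_unit_roots_in_class m r : (1 <= m)%nat -> (lte_modulus p | p ^ Z.of_nat m) ->
  (count_if (fun z => unit_rootb k (p ^ Z.of_nat m) z && divb (lte_modulus p) (z - r))
     (zseq 0 (p ^ Z.of_nat m)) <= Z.to_nat (p ^ Z.of_nat s))%nat.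
Proof.
  intros Hm H0. pose proof (prime_ge_2 p prime_p).
  set (q := p ^ Z.of_nat m) in *. set (Q := p ^ Z.of_nat (m - s)).
  assert (HQ : 0 < Q) by (apply Z.pow_pos_nonneg; lia).
  assert (HqQ : q <= Q * p ^ Z.of_nat s).
  { unfold Q, q. rewrite <- Z.pow_add_r by lia. apply Z.pow_le_mono_r; lia. }
  assert (Hp0 : lte_modulus p <> 0) by (unfold lte_modulus; destruct (Z.eqb p 2); lia).
  unfold count_if. rewrite <- (length_zseq 0 (p ^ Z.of_nat s)).
  apply (NoDup_length_le_inj (fun z => z / Q)); [apply NoDup_filter, zseq_NoDup| |].
  - intros z Hz. apply filter_In in Hz as [Hz _]. apply in_zseq in Hz.
    apply in_zseq. split; [apply Z.div_pos; lia|].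
    enough (z / Q < p ^ Z.of_nat s) by lia. apply Z.div_lt_upper_bound; lia.
  - intros z z' Hz Hz' E. apply filter_In in Hz as [Hz1 Hz2], Hz' as [Hz1' Hz2'].
    apply andb_prop in Hz2 as [Hz2 Hz3], Hz2' as [Hz2' Hz3'].
    unfold unit_rootb in Hz2, Hz2'. apply divb_iff in Hz2, Hz2', Hz3, Hz3'; try lia.
    assert (Hd : (Q | z' - z)).
    { apply unit_roots_congr_lift; auto.
      replace (z - z') with ((z - r) - (z' - r)) by ring. now apply Z.divide_sub_r. }
    apply mod_eq_of_divide_sub in Hd; [|exact HQ].
    pose proof (Z.div_mod z Q ltac:(lia)). pose proof (Z.div_mod z' Q ltac:(lia)). lia.
Qed.

End UnitRootsModPrimePower.

Lemma rho_lte_modulus_le p k : prime p -> (1 <= k)%nat ->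
  (rho k (lte_modulus p) <= Nat.max k 4)%nat.
Proof.
  intros Hp Hk. unfold lte_modulus. destruct (Z.eqb_spec p 2).
  - pose proof (rho_le_modulus k 4). lia.
  - pose proof (rho_prime_le p k Hp Hk). lia.
Qed.

Lemma lte_modulus_divide_pow p m : prime p -> (2 <= m)%nat -> (lte_modulus p | p ^ Z.of_nat m).
Proof.
  intros Hp Hm. unfold lte_modulus. destruct (Z.eqb_spec p 2) as [->|_].
  - change 4 with (2 ^ Z.of_nat 2). now apply divide_pow_pow_le.
  - apply divide_pow_of_divide; [lia|apply Z.divide_refl].
Qed.

(* Sort the roots modulo [p^m] by their residue modulo [lte_modulus p]. *)
Lemma rho_prime_power_le p k m : prime p -> (1 <= k)%nat ->
  (rho k (p ^ Z.of_nat m) <= 4 * k * k)%nat.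
Proof.
  intros Hp Hk. pose proof (prime_ge_2 p Hp).
  destruct (Nat.le_gt_cases m 1) as [Hm|Hm].
  { destruct m as [|[|]]; [|cbn [Z.of_nat]; rewrite Z.pow_1_r|lia].
    - pose proof (rho_le_modulus k (p ^ Z.of_nat 0)). cbn in *. lia.
    - pose proof (rho_prime_le p k Hp Hk). nia. }
  set (q := p ^ Z.of_nat m).
  destruct (lifting_the_exponent p k Hp Hk) as [s [Hs Hlift]].
  assert (Hsk : (Z.to_nat (p ^ Z.of_nat s) <= k)%nat)
    by (apply Zdivide_le in Hs; try lia; apply Z.pow_pos_nonneg; lia).
  assert (Hp0 : 0 < lte_modulus p) by (unfold lte_modulus; destruct (Z.eqb p 2); lia).
  pose proof (rho_lte_modulus_le p k Hp Hk) as Hres.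
  unfold rho. eapply Nat.le_trans.
  { apply (count_if_cover _ (fun r z => unit_rootb k q z && divb (lte_modulus p) (z - r))
             (filter (unit_rootb k (lte_modulus p)) (zseq 0 (lte_modulus p)))).
    intros z Hz Hr. exists (z mod lte_modulus p). split.
    - apply filter_In. split.
      + apply in_zseq. pose proof (Z.mod_pos_bound z (lte_modulus p) Hp0). lia.
      + unfold unit_rootb in *. apply divb_iff in Hr; [|lia]. apply divb_iff; [lia|].
        apply divide_pow_sub_1_mod with q; auto; [lia|]. now apply lte_modulus_divide_pow.
    - rewrite Hr. cbn [andb]. apply divb_iff; [lia|]. apply divide_sub_mod. lia. }
  eapply Nat.le_trans.
  { apply sum_over_le_const with (c := Z.to_nat (p ^ Z.of_nat s)). intros r _.
    apply count_unit_roots_in_class; auto; [lia|]. now apply lte_modulus_divide_pow. }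
  unfold rho, count_if in Hres.
  assert (Nat.max k 4 <= 4 * k)%nat by lia. nia.
Qed.

(** * The divisor function *)

Definition divisors (n : Z) : list Z := filter (fun g => divb g n) (zseq 1 n).

Definition tau (n : Z) : nat := length (divisors n).

Lemma in_divisors n g : 1 <= n -> In g (divisors n) <-> 1 <= g <= n /\ (g | n).
Proof.
  intros Hn. unfold divisors. rewrite filter_In, in_zseq. split.
  - intros [H1 H2]. apply divb_iff in H2; [|lia]. split; [lia|exact H2].
  - intros [H1 H2]. split; [lia|]. apply divb_iff; [lia|exact H2].
Qed.

Lemma tau_le n : (tau n <= Z.to_nat n)%nat.
Proof. unfold tau, divisors. rewrite <- (length_zseq 1 n). apply filter_length_le. Qed.

Lemma gcd_mul_split g a b : 1 <= g -> 1 <= a -> 1 <= b -> Z.gcd a b = 1 -> (g | a * b) ->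
  g = Z.gcd g a * Z.gcd g b.
Proof.
  intros Hg Ha Hb Hab Hd.
  apply Z.divide_antisym_nonneg; [lia| | |].
  - pose proof (Z.gcd_nonneg g a); pose proof (Z.gcd_nonneg g b). nia.
  - apply Z.divide_trans with (Z.gcd (g * Z.gcd g b) (a * Z.gcd g b)).
    + apply Z.gcd_greatest; [apply Z.divide_factor_l|].
      rewrite <- Z.gcd_mul_mono_l_nonneg by lia.
      apply Z.gcd_greatest; [apply Z.divide_factor_r|exact Hd].
    + rewrite Z.gcd_mul_mono_r_nonneg by apply Z.gcd_nonneg. apply Z.divide_refl.
  - apply divide_mul_of_coprime; [|apply Z.gcd_divide_l|apply Z.gcd_divide_l].
    apply Z.gcd_unique; try lia; try apply Z.divide_1_l.
    intros q H1 H2. rewrite <- Hab. apply Z.gcd_greatest.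
    + eapply Z.divide_trans; [apply H1|apply Z.gcd_divide_r].
    + eapply Z.divide_trans; [apply H2|apply Z.gcd_divide_r].
Qed.

Lemma gcd_in_divisors g a : 1 <= g -> 1 <= a -> In (Z.gcd g a) (divisors a).
Proof.
  intros Hg Ha. apply in_divisors; [exact Ha|]. split; [split|apply Z.gcd_divide_r].
  - assert (Z.gcd g a <> 0) by (rewrite Z.gcd_eq_0; lia). pose proof (Z.gcd_nonneg g a). lia.
  - apply Z.divide_pos_le; [lia|apply Z.gcd_divide_r].
Qed.

Lemma tau_mul_le a b : 1 <= a -> 1 <= b -> Z.gcd a b = 1 -> (tau (a * b) <= tau a * tau b)%nat.
Proof.
  intros Ha Hb Hab. unfold tau. rewrite <- length_prod.
  apply (NoDup_length_le_inj (fun g => (Z.gcd g a, Z.gcd g b))).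
  - apply NoDup_filter, zseq_NoDup.
  - intros g Hg. apply in_divisors in Hg as [Hg _]; [|nia].
    apply in_prod; apply gcd_in_divisors; lia.
  - intros g g' Hg Hg' E. injection E as E1 E2.
    apply in_divisors in Hg as [? ?], Hg' as [? ?]; try nia.
    rewrite (gcd_mul_split g a b), (gcd_mul_split g' a b) by (assumption || lia). congruence.
Qed.

Lemma tau_prime_power_le p m : prime p -> (tau (p ^ Z.of_nat m) <= S m)%nat.
Proof.
  intros Hp. pose proof (prime_ge_2 p Hp). unfold tau.
  assert (Hq : 1 <= p ^ Z.of_nat m) by (pose proof (pow_of_nat_pos p m ltac:(lia)); lia).
  replace (S m) with (length (map (fun i => p ^ Z.of_nat i) (seq 0 (S m))))
    by now rewrite length_map, length_seq.
  apply NoDup_incl_length; [apply NoDup_filter, zseq_NoDup|].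
  intros g Hg. apply in_divisors in Hg as [Hg1 Hg2]; [|exact Hq].
  destruct (Zdivide_power_2 g p (Z.of_nat m) ltac:(lia) ltac:(lia) Hp Hg2) as [j Hj].
  assert (Hj0 : 0 <= j).
  { destruct (Z_lt_le_dec j 0); auto. rewrite Z.pow_neg_r in Hj by auto. lia. }
  assert (Hjm : j <= Z.of_nat m).
  { destruct (Z_le_gt_dec j (Z.of_nat m)); auto.
    assert (p ^ Z.of_nat m < p ^ j) by (apply Z.pow_lt_mono_r; lia). lia. }
  apply in_map_iff. exists (Z.to_nat j). split; [now rewrite Z2Nat.id|]. apply in_seq. lia.
Qed.

(** * Submultiplicative functions of polynomially bounded growth *)

Lemma exists_prime_divisor n : 1 < n -> exists p, prime p /\ (p | n).
Proof.
  intros Hn. remember (Z.to_nat n) as N eqn:EN. revert n Hn EN.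
  induction N as [N IH] using (well_founded_induction lt_wf). intros n Hn EN.
  destruct (prime_dec n) as [Hp|Hp]; [exists n; split; [exact Hp|apply Z.divide_refl]|].
  destruct (not_prime_divide n Hn Hp) as [d [Hd1 Hd2]].
  destruct (IH (Z.to_nat d) ltac:(lia) d ltac:(lia) eq_refl) as [p [Hp1 Hp2]].
  exists p. split; [exact Hp1|]. eapply Z.divide_trans; eauto.
Qed.

Lemma prime_power_decomposition p n : prime p -> 1 <= n ->
  exists (m : nat) n', n = p ^ Z.of_nat m * n' /\ 1 <= n' /\ ~ (p | n').
Proof.
  intros Hp Hn. pose proof (prime_ge_2 p Hp).
  remember (Z.to_nat n) as N eqn:EN. revert n Hn EN.
  induction N as [N IH] using (well_founded_induction lt_wf). intros n Hn EN.
  destruct (Zdivide_dec p n) as [[c Hc]|Hpn].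
  - destruct (IH (Z.to_nat c) ltac:(nia) c ltac:(nia) eq_refl) as [m [n' [E [H1 H2]]]].
    exists (S m), n'. split; [|auto]. rewrite pow_of_nat_succ, Hc, E. ring.
  - exists 0%nat, n. split; [rewrite Z.pow_0_r; ring|auto].
Qed.

Local Open Scope R_scope.

Lemma Rpower_pos x y : 0 < Rpower x y.
Proof. apply exp_pos. Qed.

Lemma Rpower_1_base y : Rpower 1 y = 1.
Proof. unfold Rpower. now rewrite ln_1, Rmult_0_r, exp_0. Qed.

Lemma Rpower_ge_1 x y : 1 <= x -> 0 <= y -> 1 <= Rpower x y.
Proof. intros. rewrite <- (Rpower_O x) by lra. now apply Rle_Rpower. Qed.

Lemma Rpower_IZR_pow p m y : (0 < p)%Z ->
  Rpower (IZR (p ^ Z.of_nat m)) y = Rpower (IZR p) (INR m * y).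
Proof.
  intros Hp. rewrite <- pow_IZR, <- Rpower_pow by (apply IZR_lt; lia). apply Rpower_mult.
Qed.

Lemma Rpower_IZR_mul a b y : (0 < a)%Z -> (0 < b)%Z ->
  Rpower (IZR (a * b)) y = Rpower (IZR a) y * Rpower (IZR b) y.
Proof.
  intros Ha Hb. rewrite mult_IZR. symmetry. apply Rpower_mult_distr; apply IZR_lt; lia.
Qed.

Section SubmultiplicativeBound.

Variables (f : Z -> nat) (dl K : R) (P0 : nat).
Hypothesis K_ge_1 : 1 <= K.
Hypothesis f_one : (f 1%Z <= 1)%nat.
Hypothesis f_mul : forall a b, (1 <= a)%Z -> (1 <= b)%Z -> Z.gcd a b = 1%Z ->
  (f (a * b)%Z <= f a * f b)%nat.
Hypothesis f_prime_power : forall p m, prime p ->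
  INR (f (p ^ Z.of_nat m)%Z) <= K * Rpower (IZR p) (INR m * dl).
Hypothesis f_large_prime_power : forall p m, prime p -> (Z.of_nat P0 <= p)%Z ->
  INR (f (p ^ Z.of_nat m)%Z) <= Rpower (IZR p) (INR m * dl).

Lemma f_mul_prime_power p m n : prime p -> (1 <= n)%Z -> ~ (p | n)%Z ->
  INR (f (p ^ Z.of_nat m * n)%Z) <= INR (f (p ^ Z.of_nat m)%Z) * INR (f n).
Proof.
  intros Hp Hn Hpn. rewrite <- mult_INR. apply le_INR. pose proof (prime_ge_2 p Hp).
  apply f_mul; [pose proof (pow_of_nat_pos p m ltac:(lia)); lia|exact Hn|].
  apply Zgcd_1_rel_prime, rel_prime_prime_pow; auto; lia.
Qed.

Lemma f_bound_no_small_prime n : (1 <= n)%Z ->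
  (forall p, prime p -> (p | n)%Z -> (Z.of_nat P0 <= p)%Z) ->
  INR (f n) <= Rpower (IZR n) dl.
Proof.
  remember (Z.to_nat n) as N eqn:EN. revert n EN.
  induction N as [N IH] using (well_founded_induction lt_wf). intros n EN Hn Hlarge.
  destruct (Z.eq_dec n 1) as [->|Hn1].
  { rewrite Rpower_1_base. apply le_INR in f_one. cbn in f_one. lra. }
  destruct (exists_prime_divisor n ltac:(lia)) as [p [Hp Hpn]]. pose proof (prime_ge_2 p Hp).
  destruct (prime_power_decomposition p n Hp Hn) as [m [n' [E [Hn' Hpn']]]].
  destruct m as [|m].
  { rewrite Z.pow_0_r, Z.mul_1_l in E. subst. contradiction. }
  assert (Hlt : (n' < n)%Z).
  { rewrite E, pow_of_nat_succ. pose proof (pow_of_nat_pos p m ltac:(lia)).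
    assert (2 <= p * p ^ Z.of_nat m)%Z by nia. nia. }
  rewrite E. eapply Rle_trans; [now apply f_mul_prime_power|].
  rewrite Rpower_IZR_mul, Rpower_IZR_pow by (try apply Z.pow_pos_nonneg; lia).
  apply Rmult_le_compat; try apply pos_INR; [now apply f_large_prime_power, Hlarge|].
  apply (IH (Z.to_nat n')); [lia|reflexivity|exact Hn'|].
  intros q Hq Hqn. apply Hlarge; [exact Hq|]. rewrite E. now apply Z.divide_mul_r.
Qed.

(* Induction on the bound [L] of the small prime factors; each small prime costs [K]. *)
Lemma f_bound_small_primes_below (L : nat) n : (1 <= n)%Z ->
  (forall p, prime p -> (p | n)%Z -> (p < Z.of_nat P0)%Z -> (p < Z.of_nat L)%Z) ->
  INR (f n) <= K ^ L * Rpower (IZR n) dl.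
Proof.
  revert n. induction L as [|L IHL]; intros n Hn Hsmall.
  { rewrite pow_O, Rmult_1_l. apply f_bound_no_small_prime; [exact Hn|].
    intros p Hp Hpn. pose proof (prime_ge_2 p Hp).
    destruct (Z_lt_le_dec p (Z.of_nat P0)); [specialize (Hsmall p Hp Hpn); lia|auto]. }
  assert (Hdec : {prime (Z.of_nat L) /\ (Z.of_nat L | n)%Z} +
                 {~ (prime (Z.of_nat L) /\ (Z.of_nat L | n)%Z)})
    by (destruct (prime_dec (Z.of_nat L)), (Zdivide_dec (Z.of_nat L) n); tauto).
  destruct Hdec as [[HL HLn]|HL].
  - destruct (prime_power_decomposition (Z.of_nat L) n HL Hn) as [m [n' [E [Hn' Hpn']]]].
    pose proof (prime_ge_2 _ HL).
    rewrite E. eapply Rle_trans; [now apply f_mul_prime_power|].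
    rewrite Rpower_IZR_mul, Rpower_IZR_pow by (try apply Z.pow_pos_nonneg; lia).
    replace (K ^ S L * (Rpower (IZR (Z.of_nat L)) (INR m * dl) * Rpower (IZR n') dl)) with
      ((K * Rpower (IZR (Z.of_nat L)) (INR m * dl)) * (K ^ L * Rpower (IZR n') dl)) by (cbn; ring).
    apply Rmult_le_compat; try apply pos_INR; [now apply f_prime_power|].
    apply IHL; [exact Hn'|]. intros q Hq Hqn Hq0.
    assert (Hqn2 : (q | n)%Z) by (rewrite E; now apply Z.divide_mul_r).
    specialize (Hsmall q Hq Hqn2 Hq0).
    destruct (Z.eq_dec q (Z.of_nat L)); [subst; contradiction|lia].
  - apply Rle_trans with (K ^ L * Rpower (IZR n) dl).
    + apply IHL; [exact Hn|]. intros q Hq Hqn Hq0. specialize (Hsmall q Hq Hqn Hq0).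
      destruct (Z.eq_dec q (Z.of_nat L)); [subst; tauto|lia].
    + apply Rmult_le_compat_r; [apply Rlt_le, Rpower_pos|].
      rewrite <- (Rmult_1_l (K ^ L)) at 1. cbn. apply Rmult_le_compat_r; [|exact K_ge_1].
      apply pow_le. lra.
Qed.

Lemma submultiplicative_bound n : (1 <= n)%Z -> INR (f n) <= K ^ P0 * Rpower (IZR n) dl.
Proof. intros Hn. apply f_bound_small_primes_below; auto. Qed.

End SubmultiplicativeBound.

Lemma exists_Rpower_threshold c dl : 0 < dl ->
  exists P0 : nat, forall p : Z, (Z.of_nat P0 <= p)%Z -> c < Rpower (IZR p) dl.
Proof.
  intros Hdl. set (c1 := Rmax c 1). set (x0 := Rpower c1 (/ dl)).
  assert (Hc1 : 1 <= c1) by apply Rmax_r.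
  exists (Z.to_nat (up x0)). intros p Hp. destruct (archimed x0) as [Hup _].
  assert (Hx0 : 0 < x0) by apply Rpower_pos.
  assert (Hp' : x0 < IZR p).
  { apply Rlt_le_trans with (IZR (up x0)); [lra|]. apply IZR_le.
    assert (0 < up x0)%Z by (apply lt_IZR; lra). lia. }
  assert (Ec1 : Rpower x0 dl = c1).
  { unfold x0. rewrite Rpower_mult, Rinv_l by lra. apply Rpower_1. lra. }
  apply Rle_lt_trans with c1; [apply Rmax_l|]. rewrite <- Ec1. now apply Rlt_Rpower_l.
Qed.

Lemma Rpower_prime_ge_1 p y : prime p -> 0 <= y -> 1 <= Rpower (IZR p) y.
Proof.
  intros Hp Hy. apply Rpower_ge_1; [|exact Hy]. apply IZR_le. pose proof (prime_ge_2 p Hp). lia.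
Qed.

Lemma Rpower_prime_le_pow p m dl : prime p -> (1 <= m)%nat -> 0 <= dl ->
  Rpower (IZR p) dl <= Rpower (IZR p) (INR m * dl).
Proof.
  intros Hp Hm Hdl. apply Rle_Rpower.
  - apply IZR_le. pose proof (prime_ge_2 p Hp). lia.
  - apply le_INR in Hm. cbn in Hm. nra.
Qed.

Lemma rho_bound k dl : (1 <= k)%nat -> 0 < dl -> exists C, 0 < C /\
  forall n, (1 <= n)%Z -> INR (rho k n) <= C * Rpower (IZR n) dl.
Proof.
  intros Hk Hdl. set (c0 := INR (4 * k * k)).
  assert (Hc0 : 1 <= c0) by (unfold c0; replace 1 with (INR 1) by reflexivity; apply le_INR; nia).
  destruct (exists_Rpower_threshold c0 dl Hdl) as [P0 HP0].
  exists (c0 ^ P0). split; [apply pow_lt; lra|].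
  apply submultiplicative_bound; [exact Hc0|apply rho_le_modulus|apply rho_mul_le| |].
  - intros p m Hp. eapply Rle_trans; [apply le_INR, rho_prime_power_le; auto|].
    assert (0 <= INR m * dl) by (pose proof (pos_INR m); nra).
    pose proof (Rpower_prime_ge_1 p (INR m * dl) Hp H). fold c0. nra.
  - intros p [|m] Hp HpP0.
    + rewrite Rmult_0_l, Rpower_O by (apply IZR_lt; pose proof (prime_ge_2 p Hp); lia).
      apply (le_INR _ 1), rho_le_modulus.
    + eapply Rle_trans; [apply le_INR, rho_prime_power_le; auto|].
      pose proof (Rpower_prime_le_pow p (S m) dl Hp ltac:(lia) ltac:(lra)).
      specialize (HP0 p HpP0). fold c0. lra.
Qed.

Lemma tau_bound dl : 0 < dl -> exists C, 0 < C /\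
  forall n, (1 <= n)%Z -> INR (tau n) <= C * Rpower (IZR n) dl.
Proof.
  intros Hdl. assert (Hln2 : 0 < ln 2) by (rewrite <- ln_1; apply ln_increasing; lra).
  set (K := Rmax 1 (/ (dl * ln 2))).
  assert (HK1 : 1 <= K) by apply Rmax_l.
  assert (HKd : 1 <= K * (dl * ln 2)).
  { apply Rmult_le_reg_r with (/ (dl * ln 2)); [apply Rinv_0_lt_compat; nra|].
    rewrite Rmult_assoc, Rinv_r, Rmult_1_r, Rmult_1_l by nra. apply Rmax_r. }
  destruct (exists_Rpower_threshold 2 dl Hdl) as [P0 HP0].
  exists (K ^ P0). split; [apply pow_lt; lra|].
  apply submultiplicative_bound; [exact HK1|apply tau_le|apply tau_mul_le| |].
  - (* [m + 1 <= K (1 + m dl ln 2) <= K 2^(m dl) <= K p^(m dl)] *)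
    intros p m Hp. eapply Rle_trans; [apply le_INR, tau_prime_power_le; auto|].
    rewrite S_INR. pose proof (pos_INR m).
    assert (E1 : 1 + INR m * dl * ln 2 <= Rpower (IZR p) (INR m * dl)).
    { eapply Rle_trans; [apply exp_ineq1_le|].
      change (exp (INR m * dl * ln 2)) with (Rpower 2 (INR m * dl)).
      apply Rle_Rpower_l; [nra|]. split; [lra|]. apply IZR_le, prime_ge_2, Hp. }
    nra.
  - intros p m Hp HpP0. eapply Rle_trans; [apply le_INR, tau_prime_power_le; auto|].
    apply Rle_trans with (INR (2 ^ m)); [apply le_INR, Nat.pow_gt_lin_r; lia|].
    rewrite pow_INR, Rmult_comm, <- Rpower_mult, Rpower_pow by apply Rpower_pos.
    apply pow_incr. specialize (HP0 p HpP0). cbn. lra.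
Qed.

(** * Reduction by [gcd(u, v, d)] *)

Local Open Scope Z_scope.

Lemma gcd_pos_l d a : 1 <= d -> 1 <= Z.gcd d a.
Proof.
  intros Hd. assert (Z.gcd d a <> 0) by (rewrite Z.gcd_eq_0; lia). pose proof (Z.gcd_nonneg d a). lia.
Qed.

Lemma gcd_mul_div_eq a d : 1 <= d -> d = Z.gcd d a * (d / Z.gcd d a).
Proof.
  intros Hd. apply Zdivide_Zdiv_eq; [|apply Z.gcd_divide_l].
  pose proof (gcd_pos_l d a Hd). lia.
Qed.

Lemma divide_div_gcd d a t : 1 <= d -> (d | a * t) -> (d / Z.gcd d a | t).
Proof.
  intros Hd H. set (h := Z.gcd d a).
  assert (Hh : 0 < h) by (unfold h; pose proof (gcd_pos_l d a Hd); lia).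
  assert (Ed : d = h * (d / h)) by (apply gcd_mul_div_eq, Hd).
  assert (Ea : a = h * (a / h)) by (apply Zdivide_Zdiv_eq; [lia|apply Z.gcd_divide_r]).
  apply Z.gauss with (a / h).
  - rewrite Ed, Ea, <- Z.mul_assoc in H. now apply Z.mul_divide_cancel_l in H; [|lia].
  - now apply Z.gcd_div_gcd; [lia|].
Qed.

Definition reduced_modulus (k : nat) (d g : Z) : Z := d / Z.gcd d (g ^ Z.of_nat k).

Lemma reduced_modulus_pos k d g : 1 <= d -> 1 <= reduced_modulus k d g.
Proof.
  intros Hd. unfold reduced_modulus.
  pose proof (gcd_mul_div_eq (g ^ Z.of_nat k) d Hd).
  pose proof (gcd_pos_l d (g ^ Z.of_nat k) Hd). nia.
Qed.

Lemma reduced_modulus_le k d g : 1 <= d -> reduced_modulus k d g <= d.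
Proof.
  intros Hd. unfold reduced_modulus.
  pose proof (gcd_pos_l d (g ^ Z.of_nat k) Hd).
  apply Z.div_le_upper_bound; nia.
Qed.

Lemma reduced_modulus_size k d g : (2 <= k)%nat -> 1 <= g -> 1 <= d ->
  d ^ 2 <= (g ^ 2 * reduced_modulus k d g) ^ Z.of_nat k.
Proof.
  intros Hk Hg Hd. pose proof (reduced_modulus_pos k d g Hd) as Hdp.
  pose proof (gcd_mul_div_eq (g ^ Z.of_nat k) d Hd) as Ed. fold (reduced_modulus k d g) in Ed.
  set (h := Z.gcd d (g ^ Z.of_nat k)) in *. set (dp := reduced_modulus k d g) in *.
  assert (Hgk : 1 <= g ^ Z.of_nat k) by (pose proof (pow_of_nat_pos g k ltac:(lia)); lia).
  assert (Hh : 0 < h) by (pose proof (gcd_pos_l d (g ^ Z.of_nat k) Hd); lia).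
  assert (Hhg : h <= g ^ Z.of_nat k) by (apply Z.divide_pos_le; [lia|apply Z.gcd_divide_r]).
  rewrite Z.pow_mul_l, <- Z.pow_mul_r by lia.
  replace (2 * Z.of_nat k) with (Z.of_nat k * 2) by lia. rewrite Z.pow_mul_r by lia.
  assert (Hdpk : dp ^ 2 <= dp ^ Z.of_nat k) by (apply Z.pow_le_mono_r; lia).
  rewrite Ed, Z.pow_mul_l.
  assert (h ^ 2 <= (g ^ Z.of_nat k) ^ 2) by (apply Z.pow_le_mono_l; lia).
  assert (0 <= h ^ 2) by (apply Z.pow_nonneg; lia).
  assert (0 <= dp ^ 2) by (apply Z.pow_nonneg; lia).
  nia.
Qed.

(* A prime [p] dividing both [u1] and [d'] would make [p g] a common divisor of [g u1],
   [g v1] and [d]. *)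
Lemma reduced_pair_coprime k d g u1 v1 : (1 <= k)%nat -> 1 <= d -> 1 <= g -> (g | d) ->
  Z.gcd (Z.gcd (g * u1) (g * v1)) d = g ->
  (reduced_modulus k d g | u1 ^ Z.of_nat k - v1 ^ Z.of_nat k) ->
  Z.gcd u1 (reduced_modulus k d g) = 1.
Proof.
  intros Hk Hd Hg Hgd Hgcd Hdiff.
  pose proof (reduced_modulus_pos k d g Hd) as Hdp. set (dp := reduced_modulus k d g) in *.
  destruct (Z.eq_dec (Z.gcd u1 dp) 1) as [|Hne]; [assumption|exfalso].
  assert (Hc1 : 1 < Z.gcd u1 dp)
    by (pose proof (gcd_pos_l dp u1 Hdp); rewrite (Z.gcd_comm dp u1) in *; lia).
  destruct (exists_prime_divisor _ Hc1) as [p [Hp Hpc]]. pose proof (prime_ge_2 p Hp).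
  assert (Hpu : (p | u1)) by (eapply Z.divide_trans; [apply Hpc|apply Z.gcd_divide_l]).
  assert (Hpd : (p | dp)) by (eapply Z.divide_trans; [apply Hpc|apply Z.gcd_divide_r]).
  destruct (Zdivide_dec p v1) as [Hpv|Hpv].
  - assert (Hpgd : (g * p | d)).
    { rewrite (gcd_mul_div_eq (g ^ Z.of_nat k) d Hd). fold dp.
      apply divide_mul_mul; [|exact Hpd].
      apply Z.gcd_greatest; [exact Hgd|now apply divide_pow_of_divide, Z.divide_refl]. }
    assert (Hpgg : (g * p | g)).
    { rewrite <- Hgcd at 2. apply Z.gcd_greatest; [|exact Hpgd].
      apply Z.gcd_greatest; now apply Z.mul_divide_mono_l. }
    apply Z.divide_pos_le in Hpgg; nia.
  - apply Hpv, (prime_divide_pow p v1 k Hp).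
    replace (v1 ^ Z.of_nat k) with (u1 ^ Z.of_nat k - (u1 ^ Z.of_nat k - v1 ^ Z.of_nat k)) by ring.
    apply Z.divide_sub_r; [now apply divide_pow_of_divide|now apply Z.divide_trans with dp].
Qed.

Lemma pair_gcd_reduction k d u v : (1 <= k)%nat -> 1 <= d -> (d | u ^ Z.of_nat k - v ^ Z.of_nat k) ->
  exists g, In g (divisors d) /\ (g | u) /\ (g | v) /\
    Z.gcd (u / g) (reduced_modulus k d g) = 1 /\
    (reduced_modulus k d g | (u / g) ^ Z.of_nat k - (v / g) ^ Z.of_nat k).
Proof.
  intros Hk Hd Hdiv. set (g := Z.gcd (Z.gcd u v) d).
  assert (Hg : 1 <= g) by (unfold g; rewrite Z.gcd_comm; now apply gcd_pos_l).
  assert (Hgd : (g | d)) by apply Z.gcd_divide_r.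
  assert (Hgu : (g | u)) by (eapply Z.divide_trans; [apply Z.gcd_divide_l|apply Z.gcd_divide_l]).
  assert (Hgv : (g | v)) by (eapply Z.divide_trans; [apply Z.gcd_divide_l|apply Z.gcd_divide_r]).
  assert (Eu : u = g * (u / g)) by (apply Zdivide_Zdiv_eq; [lia|exact Hgu]).
  assert (Ev : v = g * (v / g)) by (apply Zdivide_Zdiv_eq; [lia|exact Hgv]).
  assert (Hred : (reduced_modulus k d g | (u / g) ^ Z.of_nat k - (v / g) ^ Z.of_nat k)).
  { apply divide_div_gcd; [exact Hd|].
    replace (g ^ Z.of_nat k * ((u / g) ^ Z.of_nat k - (v / g) ^ Z.of_nat k)) with
      ((g * (u / g)) ^ Z.of_nat k - (g * (v / g)) ^ Z.of_nat k) by (rewrite !Z.pow_mul_l; ring).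
    now rewrite <- Eu, <- Ev. }
  exists g. repeat split; auto.
  - apply in_divisors; [exact Hd|]. split; [split; [exact Hg|]|exact Hgd].
    apply Z.divide_pos_le; [lia|exact Hgd].
  - apply reduced_pair_coprime with (v / g); auto. now rewrite <- Eu, <- Ev.
Qed.

(** * Counting the pairs *)

Definition admissible (k : nat) (d X : Z) (p : Z * Z) : bool :=
  Z.leb (Z.abs (fst p)) X && Z.leb (Z.abs (snd p)) X &&
  divb d (fst p ^ Z.of_nat k - snd p ^ Z.of_nat k).

(* The conditions that [pair_gcd_reduction] establishes for [g = gcd(u, v, d)]. *)
Definition admissible_at (k : nat) (d X g : Z) (p : Z * Z) : bool :=
  let q := reduced_modulus k d g in
  Z.leb (Z.abs (fst p)) X && Z.leb (Z.abs (snd p)) X && divb g (fst p) && divb g (snd p) &&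
  Z.eqb (Z.gcd (fst p / g) q) 1 &&
  divb q ((fst p / g) ^ Z.of_nat k - (snd p / g) ^ Z.of_nat k).

(* With [a u1 = 1 (mod q)], the ratio [z = v1 a] is a [k]-th root of unity modulo [q]
   and [v = g u1 z (mod g q)]. *)
Lemma ratio_unit_root k q g u1 v1 a b : 1 <= q -> a * u1 + b * q = 1 ->
  (q | u1 ^ Z.of_nat k - v1 ^ Z.of_nat k) ->
  (q | ((v1 * a) mod q) ^ Z.of_nat k - 1) /\ (g * q | g * v1 - g * u1 * ((v1 * a) mod q)).
Proof.
  intros Hq Hab Hdiff. set (z := (v1 * a) mod q).
  assert (Hz : (q | v1 * a - z)) by (apply divide_sub_mod; lia).
  split.
  - replace (z ^ Z.of_nat k - 1) with
      (- ((v1 * a) ^ Z.of_nat k - z ^ Z.of_nat k) - a ^ Z.of_nat k * (u1 ^ Z.of_nat k - v1 ^ Z.of_nat k)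
       + ((a * u1) ^ Z.of_nat k - 1)) by (rewrite !Z.pow_mul_l; ring).
    apply Z.divide_add_r; [apply Z.divide_sub_r|].
    + apply Z.divide_opp_r. eapply Z.divide_trans; [apply Hz|apply divide_pow_sub_pow].
    + now apply Z.divide_mul_r.
    + apply divide_pow_sub_1. exists (- b). lia.
  - replace (g * v1 - g * u1 * z) with (g * (u1 * (v1 * a - z) + v1 * b * q)).
    2:{ transitivity (g * (v1 * (a * u1 + b * q) - u1 * z)); [ring|]. rewrite Hab. ring. }
    apply Z.mul_divide_mono_l. apply Z.divide_add_r; [now apply Z.divide_mul_r|].
    apply Z.divide_factor_r.
Qed.

(* For fixed [u], the admissible [v] lie in [rho(q)] residue classes modulo [g q]. *)
Lemma count_admissible_at_fixed k d X g u l : 1 <= d -> 1 <= g -> 0 <= X -> NoDup l ->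
  (count_if (fun v => admissible_at k d X g (u, v)) l <=
   rho k (reduced_modulus k d g) * (Z.to_nat (2 * X / (g * reduced_modulus k d g)) + 1))%nat.
Proof.
  intros Hd Hg HX Hl. set (q := reduced_modulus k d g).
  assert (Hq : 1 <= q) by now apply reduced_modulus_pos.
  destruct (Z.eq_dec (Z.gcd (u / g) q) 1) as [Hc|Hc].
  2:{ rewrite count_if_zero; [lia|]. intros v _. unfold admissible_at. cbn [fst snd]. fold q.
      destruct (Z.eqb_spec (Z.gcd (u / g) q) 1); [contradiction|]. now rewrite !andb_false_r. }
  destruct (rel_prime_bezout _ _ (proj1 (Zgcd_1_rel_prime _ _) Hc)) as [a b Hab].
  eapply Nat.le_trans.
  { apply (count_if_cover _ (fun z v => Z.leb (Z.abs v) X && divb (g * q) (v - g * (u / g) * z))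
             (filter (unit_rootb k q) (zseq 0 q))).
    intros v _ Hv. unfold admissible_at in Hv. cbn [fst snd] in Hv. fold q in Hv.
    repeat rewrite andb_true_iff in Hv. destruct Hv as [[[[[_ Hvx] _] Hgv] _] Hdiff].
    apply divb_iff in Hgv, Hdiff; try lia.
    destruct (ratio_unit_root k q g (u / g) (v / g) a b Hq Hab Hdiff) as [Hroot Hcongr].
    rewrite <- (Zdivide_Zdiv_eq g v) in Hcongr by (lia || exact Hgv).
    exists ((v / g * a) mod q). split.
    - apply filter_In. split; [apply in_zseq; apply Z.mod_pos_bound; lia|].
      apply divb_iff; [lia|exact Hroot].
    - rewrite Hvx. apply divb_iff; [nia|exact Hcongr]. }
  eapply Nat.le_trans.
  { apply sum_over_le_const with (c := (Z.to_nat (2 * X / (g * q)) + 1)%nat). intros z _.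
    apply count_arith_progression; auto; nia. }
  unfold rho, count_if. lia.
Qed.

Lemma count_admissible_le k d X l : (1 <= k)%nat -> 1 <= d -> 0 <= X -> NoDup l ->
  (count_if (admissible k d X) (list_prod l l) <=
   sum_over (fun g => (Z.to_nat (2 * X / g) + 1) *
     (rho k (reduced_modulus k d g) * (Z.to_nat (2 * X / (g * reduced_modulus k d g)) + 1)))%nat
     (divisors d))%nat.
Proof.
  intros Hk Hd HX Hl.
  eapply Nat.le_trans.
  { apply (count_if_cover _ (admissible_at k d X) (divisors d)).
    intros [u v] _ Hadm. unfold admissible in Hadm. cbn [fst snd] in Hadm.
    repeat rewrite andb_true_iff in Hadm. destruct Hadm as [[Hu Hv] Hdiff].
    apply divb_iff in Hdiff; [|lia].
    destruct (pair_gcd_reduction k d u v Hk Hd Hdiff) as [g [Hg [Hgu [Hgv [Hco Hred]]]]].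
    exists g. split; [exact Hg|]. apply in_divisors in Hg as [Hg _]; [|exact Hd].
    pose proof (reduced_modulus_pos k d g Hd).
    unfold admissible_at. cbn [fst snd]. repeat rewrite andb_true_iff.
    repeat split; try assumption; try (apply divb_iff; [lia|assumption]). now apply Z.eqb_eq. }
  apply sum_over_le. intros g Hg. apply in_divisors in Hg as [Hg _]; [|exact Hd].
  rewrite count_if_list_prod.
  set (R := (rho k (reduced_modulus k d g) *
             (Z.to_nat (2 * X / (g * reduced_modulus k d g)) + 1))%nat).
  apply Nat.le_trans with
    (sum_over (fun u => if Z.leb (Z.abs u) X && divb g (u - 0) then R else 0%nat) l).
  - apply sum_over_le. intros u _. rewrite Z.sub_0_r.
    destruct (Z.leb (Z.abs u) X && divb g u) eqn:Eu.
    + apply count_admissible_at_fixed; auto; lia.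
    + rewrite count_if_zero; [lia|]. intros v _. unfold admissible_at. cbn [fst snd].
      destruct (Z.leb (Z.abs u) X), (divb g u); cbn in Eu; try discriminate;
        now rewrite ?andb_false_r.
  - rewrite sum_over_indicator, Nat.mul_comm. apply Nat.mul_le_mono_r.
    apply count_arith_progression; auto; lia.
Qed.

(* If [2 X^k < d], the congruence forces [u^k = v^k], hence [v = u] or [v = -u]. *)
Lemma count_admissible_large_modulus k d X l : (1 <= k)%nat -> 0 <= X -> NoDup l ->
  2 * X ^ Z.of_nat k < d ->
  (count_if (admissible k d X) (list_prod l l) <= 2 * (Z.to_nat (2 * X) + 1))%nat.
Proof.
  intros Hk HX Hl Hd. rewrite count_if_list_prod.
  apply Nat.le_trans with
    (sum_over (fun u => if Z.leb (Z.abs u) X && divb 1 (u - 0) then 2%nat else 0%nat) l).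
  - apply sum_over_le. intros u _. unfold divb. rewrite Z.mod_1_r, andb_true_r.
    destruct (Z.leb (Z.abs u) X) eqn:Eu.
    + unfold count_if. change 2%nat with (length [u; - u]).
      apply (NoDup_length_le_inj (fun v => v)); [now apply NoDup_filter| |auto].
      intros v Hv. apply filter_In in Hv as [_ Hv].
      unfold admissible in Hv. cbn [fst snd] in Hv. repeat rewrite andb_true_iff in Hv.
      destruct Hv as [[Hu Hv] Hdiff]. apply Z.leb_le in Hu, Hv. apply divb_iff in Hdiff; [|lia].
      assert (Hu' : Z.abs (u ^ Z.of_nat k) <= X ^ Z.of_nat k)
        by (rewrite Z.abs_pow; apply Z.pow_le_mono_l; lia).
      assert (Hv' : Z.abs (v ^ Z.of_nat k) <= X ^ Z.of_nat k)
        by (rewrite Z.abs_pow; apply Z.pow_le_mono_l; lia).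
      apply divide_small_eq_0 in Hdiff; [|lia].
      assert (E : Z.abs u ^ Z.of_nat k = Z.abs v ^ Z.of_nat k) by (rewrite <- !Z.abs_pow; f_equal; lia).
      apply Z.pow_inj_l in E; try lia.
      destruct (Z.abs_spec u), (Z.abs_spec v); cbn; lia.
    + rewrite count_if_zero; [lia|]. intros v _. unfold admissible. cbn [fst snd]. now rewrite Eu.
  - rewrite sum_over_indicator. apply Nat.mul_le_mono_l.
    eapply Nat.le_trans; [apply count_arith_progression; auto; lia|]. rewrite Z.div_1_r. lia.
Qed.

Local Open Scope R_scope.

Lemma Rle_dec_abs_IZR_eq (u X : Z) (B : R) : IZR X <= B < IZR X + 1 ->
  (if Rle_dec (Rabs (IZR u)) B then true else false) = Z.leb (Z.abs u) X.
Proof.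
  intros [H1 H2]. rewrite <- abs_IZR. destruct (Rle_dec (IZR (Z.abs u)) B) as [H|H].
  - symmetry. apply Z.leb_le. assert (Hlt : IZR (Z.abs u) < IZR (X + 1)) by (rewrite plus_IZR; lra).
    apply lt_IZR in Hlt. lia.
  - symmetry. apply Z.leb_gt. destruct (Z_le_gt_dec (Z.abs u) X) as [H3|H3]; [|lia].
    exfalso. apply H. apply IZR_le in H3. lra.
Qed.

Lemma up_sub_1_bounds B : IZR (up B - 1) <= B < IZR (up B - 1) + 1.
Proof. destruct (archimed B). rewrite minus_IZR. lra. Qed.

Lemma up_sub_1_ge_1 B : 1 <= B -> (1 <= up B - 1)%Z.
Proof.
  intros HB. destruct (archimed B) as [Hup _].
  assert (Hlt : 1 < IZR (up B)) by lra. apply lt_IZR in Hlt. lia.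
Qed.

Lemma pair_count_eq k B d : pair_count k B d =
  count_if (admissible k (Z.of_nat d) (up B - 1)) (list_prod (zrange (Z.abs (up B))) (zrange (Z.abs (up B)))).
Proof.
  apply count_if_ext. intros [u v]. unfold admissible. cbn [fst snd].
  now rewrite !(Rle_dec_abs_IZR_eq _ (up B - 1) B (up_sub_1_bounds B)).
Qed.

Lemma sum_over_INR_le {A} (h : A -> nat) (l : list A) (M : R) :
  (forall x, In x l -> INR (h x) <= M) -> INR (sum_over h l) <= INR (length l) * M.
Proof.
  induction l as [|x l IH]; intros H; [cbn; lra|].
  rewrite sum_over_cons, plus_INR, length_cons, S_INR.
  specialize (IH (fun y Hy => H y (or_intror Hy))). specialize (H x (or_introl eq_refl)). lra.
Qed.

Lemma INR_to_nat_div_le (X g : Z) : (0 <= X)%Z -> (1 <= g)%Z ->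
  INR (Z.to_nat (2 * X / g)) <= 2 * IZR X / IZR g.
Proof.
  intros HX Hg. rewrite INR_IZR_INZ, Z2Nat.id by (apply Z.div_pos; lia).
  assert (H : (g * (2 * X / g) <= 2 * X)%Z) by (apply Z.mul_div_le; lia).
  apply IZR_le in H. rewrite !mult_IZR in H.
  assert (0 < IZR g) by (apply IZR_lt; lia).
  apply Rmult_le_reg_l with (IZR g); [assumption|].
  replace (IZR g * (2 * IZR X / IZR g)) with (2 * IZR X) by (field; lra). lra.
Qed.

Lemma inv_size_le_Rpower k g d : (2 <= k)%nat -> (1 <= g)%Z -> (1 <= d)%Z ->
  / (IZR g * IZR g * IZR (reduced_modulus k d g)) <= Rpower (IZR d) (- (2 / INR k)).
Proof.
  intros Hk Hg Hd. pose proof (reduced_modulus_size k d g Hk Hg Hd) as Hsize.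
  pose proof (reduced_modulus_pos k d g Hd) as Hq.
  set (Y := IZR (g ^ 2 * reduced_modulus k d g)).
  assert (HY : 1 <= Y) by (unfold Y; apply IZR_le; nia).
  assert (HkR : 0 < INR k) by (apply lt_0_INR; lia).
  assert (Hd0 : 0 < IZR d) by (apply IZR_lt; lia).
  assert (E1 : Rpower (IZR d) (2 / INR k) <= Y).
  { replace (2 / INR k) with (INR 2 * / INR k) by (cbn; field; lra).
    rewrite <- Rpower_mult, Rpower_pow by assumption.
    replace Y with (Rpower (Y ^ k) (/ INR k)).
    - apply Rle_Rpower_l; [left; now apply Rinv_0_lt_compat|].
      split; [apply pow_lt; nra|]. unfold Y. rewrite !pow_IZR. now apply IZR_le.
    - rewrite <- Rpower_pow, Rpower_mult, Rinv_r by lra. apply Rpower_1. lra. }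
  rewrite Rpower_Ropp. replace (IZR g * IZR g * IZR (reduced_modulus k d g)) with Y.
  2:{ unfold Y. rewrite mult_IZR, Z.pow_2_r, mult_IZR. ring. }
  apply Rinv_le_contravar; [apply Rpower_pos|exact E1].
Qed.

Lemma progression_product_le x g q R : 1 <= x -> 1 <= g -> 1 <= q -> / (g * g * q) <= R ->
  (2 * x / g + 1) * (2 * x / (g * q) + 1) <= 4 * (x * x) * R + 5 * x.
Proof.
  intros Hx Hg Hq HR.
  assert (Ha : 0 < / g <= 1) by (split; [apply Rinv_0_lt_compat; lra|rewrite <- Rinv_1; apply Rinv_le_contravar; lra]).
  assert (Hb : 0 < / q <= 1) by (split; [apply Rinv_0_lt_compat; lra|rewrite <- Rinv_1; apply Rinv_le_contravar; lra]).
  unfold Rdiv. rewrite !Rinv_mult in *.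
  set (a := / g) in *. set (b := / q) in *.
  assert (0 <= a * b <= 1) by nra.
  assert (x * x * (a * a * b) <= x * x * R) by (apply Rmult_le_compat_l; nra).
  nra.
Qed.

Section DivisorSum.

Variables (k : nat) (dl Cr Ct : R).
Hypothesis k_ge_2 : (2 <= k)%nat.
Hypothesis dl_nonneg : 0 <= dl.
Hypothesis Cr_pos : 0 < Cr.
Hypothesis rho_le : forall n, (1 <= n)%Z -> INR (rho k n) <= Cr * Rpower (IZR n) dl.
Hypothesis tau_le : forall n, (1 <= n)%Z -> INR (tau n) <= Ct * Rpower (IZR n) dl.

Lemma divisor_term_le X d g : (1 <= X)%Z -> (1 <= d)%Z -> (1 <= g)%Z ->
  INR ((Z.to_nat (2 * X / g) + 1) *
       (rho k (reduced_modulus k d g) * (Z.to_nat (2 * X / (g * reduced_modulus k d g)) + 1))) <=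
  Cr * Rpower (IZR d) dl * (4 * (IZR X * IZR X) * Rpower (IZR d) (- (2 / INR k)) + 5 * IZR X).
Proof.
  intros HX Hd Hg. set (q := reduced_modulus k d g).
  pose proof (reduced_modulus_pos k d g Hd) as Hq. pose proof (reduced_modulus_le k d g Hd) as Hqd.
  fold q in Hq, Hqd.
  assert (Hrho : INR (rho k q) <= Cr * Rpower (IZR d) dl).
  { eapply Rle_trans; [now apply rho_le|]. apply Rmult_le_compat_l; [lra|].
    apply Rle_Rpower_l; [exact dl_nonneg|]. split; [apply IZR_lt; lia|now apply IZR_le]. }
  assert (Hx : 1 <= IZR X) by now apply IZR_le.
  assert (Hg1 : 1 <= IZR g) by now apply IZR_le.
  assert (Hq1 : 1 <= IZR q) by now apply IZR_le.
  pose proof (progression_product_le (IZR X) (IZR g) (IZR q) _ Hx Hg1 Hq1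
                (inv_size_le_Rpower k g d k_ge_2 Hg Hd)) as Hprod.
  pose proof (INR_to_nat_div_le X g ltac:(lia) Hg) as Hu.
  pose proof (INR_to_nat_div_le X (g * q) ltac:(lia) ltac:(nia)) as Hv. rewrite mult_IZR in Hv.
  rewrite !mult_INR, !plus_INR. cbn [INR].
  pose proof (pos_INR (Z.to_nat (2 * X / g))). pose proof (pos_INR (Z.to_nat (2 * X / (g * q)))).
  pose proof (pos_INR (rho k q)).
  replace ((INR (Z.to_nat (2 * X / g)) + 1) * (INR (rho k q) * (INR (Z.to_nat (2 * X / (g * q))) + 1)))
    with (INR (rho k q) * ((INR (Z.to_nat (2 * X / g)) + 1) * (INR (Z.to_nat (2 * X / (g * q))) + 1)))
    by ring.
  apply Rmult_le_compat; [lra|nra|exact Hrho|].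
  eapply Rle_trans; [|exact Hprod]. apply Rmult_le_compat; lra.
Qed.

Lemma pair_count_le_divisor_sum B d : 1 <= B -> (1 <= d)%nat ->
  INR (pair_count k B d) <= Ct * Cr * Rpower (INR d) (2 * dl) *
    (4 * (IZR (up B - 1) * IZR (up B - 1)) * Rpower (INR d) (- (2 / INR k)) + 5 * IZR (up B - 1)).
Proof.
  intros HB Hd. pose proof (up_sub_1_ge_1 B HB) as HX.
  set (X := (up B - 1)%Z) in *. set (D := Z.of_nat d).
  assert (HD : (1 <= D)%Z) by (unfold D; lia).
  replace (INR d) with (IZR D) by (unfold D; now rewrite INR_IZR_INZ).
  set (T := Cr * Rpower (IZR D) dl *
              (4 * (IZR X * IZR X) * Rpower (IZR D) (- (2 / INR k)) + 5 * IZR X)).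
  assert (HT : 0 <= T).
  { assert (1 <= IZR X) by now apply IZR_le.
    pose proof (Rpower_pos (IZR D) dl). pose proof (Rpower_pos (IZR D) (- (2 / INR k))).
    unfold T. apply Rmult_le_pos; [nra|]. nra. }
  rewrite pair_count_eq. fold X D.
  eapply Rle_trans; [apply le_INR, count_admissible_le; try lia; apply zrange_NoDup|].
  eapply Rle_trans.
  { apply (sum_over_INR_le _ _ T). intros g Hg. apply in_divisors in Hg as [[Hg _] _]; [|exact HD].
    now apply divisor_term_le. }
  fold (tau D). replace (2 * dl) with (dl + dl) by ring. rewrite Rpower_plus.
  apply Rle_trans with (Ct * Rpower (IZR D) dl * T).
  - apply Rmult_le_compat_r; [exact HT|now apply tau_le].
  - unfold T. right. ring.
Qed.

End DivisorSum.

Lemma pair_count_large_modulus_le k B d : (1 <= k)%nat -> 1 <= B ->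
  (2 * (up B - 1) ^ Z.of_nat k < Z.of_nat d)%Z -> INR (pair_count k B d) <= 6 * B.
Proof.
  intros Hk HB Hlarge. pose proof (up_sub_1_ge_1 B HB) as HX. pose proof (up_sub_1_bounds B).
  rewrite pair_count_eq.
  eapply Rle_trans; [apply le_INR, count_admissible_large_modulus; try lia; apply zrange_NoDup|].
  rewrite mult_INR, plus_INR, (INR_IZR_INZ (Z.to_nat _)), Z2Nat.id, mult_IZR by lia. cbn. lra.
Qed.

(* [d^(eps/k) <= (2 x^k)^(eps/k) = 2^(eps/k) x^eps] and [d^(eps/k - 2/k) <= d^(eps - 2/k)]. *)
Lemma divisor_sum_exponents_le k eps x B D : (1 <= k)%nat -> 0 < eps -> 1 <= x <= B ->
  1 <= D <= 2 * x ^ k ->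
  Rpower D (eps / INR k) * (4 * (x * x) * Rpower D (- (2 / INR k)) + 5 * x) <=
  5 * Rpower 2 eps * (Rpower B (1 + eps) + Rpower B (2 + eps) * Rpower D (eps - 2 / INR k)).
Proof.
  intros Hk Heps Hx HD.
  assert (HkR : 1 <= INR k) by (apply (le_INR 1); lia).
  assert (Hek : 0 < eps / INR k <= eps).
  { split; [apply Rdiv_lt_0_compat; lra|]. unfold Rdiv.
    rewrite <- (Rmult_1_r eps) at 2. apply Rmult_le_compat_l; [lra|].
    rewrite <- Rinv_1. apply Rinv_le_contravar; lra. }
  assert (Hsq : x * x * (Rpower D (eps / INR k) * Rpower D (- (2 / INR k))) <=
                Rpower B (2 + eps) * Rpower D (eps - 2 / INR k)).
  { rewrite <- Rpower_plus. apply Rmult_le_compat; try nra.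
    - apply Rlt_le, Rpower_pos.
    - apply Rle_trans with (Rpower B (INR 2)).
      + rewrite Rpower_pow by lra. cbn. nra.
      + apply Rle_Rpower; cbn; lra.
    - apply Rle_Rpower; lra. }
  assert (Hlin : x * Rpower D (eps / INR k) <= Rpower 2 eps * Rpower B (1 + eps)).
  { assert (HDx : Rpower D (eps / INR k) <= Rpower 2 eps * Rpower B eps).
    { eapply Rle_trans; [apply Rle_Rpower_l; [lra|split; [lra|apply HD]]|].
      rewrite <- Rpower_mult_distr, <- Rpower_pow, Rpower_mult by (try apply pow_lt; lra).
      replace (INR k * (eps / INR k)) with eps by (field; lra).
      apply Rmult_le_compat; try (apply Rlt_le, Rpower_pos); apply Rle_Rpower || apply Rle_Rpower_l; lra. }
    rewrite Rpower_plus, Rpower_1 by lra. pose proof (Rpower_pos D (eps / INR k)).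
    pose proof (Rpower_pos 2 eps). pose proof (Rpower_pos B eps). nra. }
  assert (H2eps : 1 <= Rpower 2 eps) by (apply Rpower_ge_1; lra).
  assert (HP2 : 0 <= Rpower B (2 + eps) * Rpower D (eps - 2 / INR k))
    by (apply Rmult_le_pos; apply Rlt_le, Rpower_pos).
  set (P2 := Rpower B (2 + eps) * Rpower D (eps - 2 / INR k)) in *.
  replace (Rpower D (eps / INR k) * (4 * (x * x) * Rpower D (- (2 / INR k)) + 5 * x)) with
    (4 * (x * x * (Rpower D (eps / INR k) * Rpower D (- (2 / INR k)))) +
     5 * (x * Rpower D (eps / INR k))) by ring.
  nra.
Qed.

Lemma pair_count_small_modulus_le k eps Cr Ct B d : (2 <= k)%nat -> 0 < eps -> 0 < Cr -> 0 < Ct ->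
  (forall n, (1 <= n)%Z -> INR (rho k n) <= Cr * Rpower (IZR n) (eps / (2 * INR k))) ->
  (forall n, (1 <= n)%Z -> INR (tau n) <= Ct * Rpower (IZR n) (eps / (2 * INR k))) ->
  1 <= B -> (1 <= d)%nat -> (Z.of_nat d <= 2 * (up B - 1) ^ Z.of_nat k)%Z ->
  INR (pair_count k B d) <= 5 * Rpower 2 eps * (Ct * Cr) *
    (Rpower B (1 + eps) + Rpower B (2 + eps) * Rpower (INR d) (eps - 2 / INR k)).
Proof.
  intros Hk Heps HCr HCt Hrho Htau HB Hd Hsmall.
  assert (HkR : 0 < INR k) by (apply lt_0_INR; lia).
  eapply Rle_trans; [apply (pair_count_le_divisor_sum k (eps / (2 * INR k)) Cr Ct); auto|].
  { apply Rlt_le, Rdiv_lt_0_compat; lra. }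
  replace (2 * (eps / (2 * INR k))) with (eps / INR k) by (field; lra).
  apply Rle_trans with (Ct * Cr * (5 * Rpower 2 eps *
    (Rpower B (1 + eps) + Rpower B (2 + eps) * Rpower (INR d) (eps - 2 / INR k)))); [|right; ring].
  rewrite Rmult_assoc. apply Rmult_le_compat_l; [apply Rmult_le_pos; lra|].
  pose proof (up_sub_1_bounds B).
  apply divisor_sum_exponents_le; [lia|exact Heps| |].
  - split; [apply IZR_le, up_sub_1_ge_1, HB|lra].
  - apply IZR_le in Hsmall. rewrite mult_IZR, <- pow_IZR, <- INR_IZR_INZ in Hsmall.
    split; [apply (le_INR 1); lia|exact Hsmall].
Qed.

Theorem lemma2p4 :
  forall k : nat, (3 <= k)%nat ->
  forall eps : R, 0 < eps ->
  exists C : R, 0 < C /\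
    forall (B : R) (d : nat), 1 <= B -> (1 <= d)%nat ->
      INR (pair_count k B d) <=
      C * (Rpower B (1 + eps) + Rpower B (2 + eps) * Rpower (INR d) (eps - 2 / INR k)).
Proof.
  intros k Hk eps Heps.
  assert (Hdl : 0 < eps / (2 * INR k))
    by (apply Rdiv_lt_0_compat; [lra|]; pose proof (lt_0_INR k ltac:(lia)); lra).
  destruct (rho_bound k _ ltac:(lia) Hdl) as [Cr [HCr Hrho]].
  destruct (tau_bound _ Hdl) as [Ct [HCt Htau]].
  set (K := 5 * Rpower 2 eps * (Ct * Cr)).
  assert (HK : 0 < K).
  { unfold K. pose proof (Rpower_pos 2 eps). pose proof (Rmult_lt_0_compat _ _ HCt HCr). nra. }
  exists (6 + K). split; [lra|]. intros B d HB Hd.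
  assert (HB1 : B <= Rpower B (1 + eps)).
  { rewrite <- (Rpower_1 B) at 1 by lra. apply Rle_Rpower; lra. }
  assert (HP2 : 0 < Rpower B (2 + eps) * Rpower (INR d) (eps - 2 / INR k))
    by (apply Rmult_lt_0_compat; apply Rpower_pos).
  assert (HKP : 0 <= K * (Rpower B (1 + eps) + Rpower B (2 + eps) * Rpower (INR d) (eps - 2 / INR k)))
    by (apply Rmult_le_pos; lra).
  destruct (Z_lt_le_dec (2 * (up B - 1) ^ Z.of_nat k) (Z.of_nat d)) as [Hlarge|Hsmall].
  - pose proof (pair_count_large_modulus_le k B d ltac:(lia) HB Hlarge) as Hcount. nra.
  - pose proof (pair_count_small_modulus_le k eps Cr Ct B d ltac:(lia) Heps HCr HCt Hrho Htau
                  HB Hd Hsmall) as Hcount.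
    fold K in Hcount. nra.
Qed.
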